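(* Let $1\le l\le m$ and $0\le r\le\lfloor(m-l-1)/2\rfloor$. Then the binary convolutional code $C=\Gamma_2G$ generated by the semi-infinite matrix $G$ described in the context is self-orthogonal, i.e. $C\subseteq C^\perp$.
   Context: For $u,v\in\mathbf F_2^N$ the boolean product is $uv=(u_1v_1,\dots,u_Nv_N)$. For $s\ge1$ let $b_0\in\mathbf F_2^{2^s}$ be all-ones and for $1\le i\le s$ let $b_i\in\mathbf F_2^{2^s}$ be the concatenation of $2^{s-i}$ blocks $(\mathbf 0\,\mathbf 1)$ with $\mathbf 0,\mathbf 1\in\mathbf F_2^{2^{i-1}}$ constant. Let $B_s^i$ be the matrix whose rows are all products of $i$ distinct elements of $\{b_1,\dots,b_s\}$ ($B_s^0=b_0$; empty for $i<0$ or $i>s$), and $G_s^r$ the matrix with rows $B_s^r,\dots,B_s^0$ stacked (empty if $r<0$), a generator matrix of the Reed–Muller code $\mathcal R(r,s)$. Let $w_j=(1,1,0,\dots,0)\in\mathbf F_2^{2^j}$ and $c\,w_j$ the concatenation of $c$ copies. For $0\le i\le l-1$, $M_{i,l}=(2^{l-i-1}w_{i+1})\otimes B_{m-l}^{r-i}$ (Kronecker product), and $M_{l,l}=[G_{m-l}^{r-l}\ 0\ \cdots\ 0]$ with $2^m$ columns. Define $G_0,\dots,G_{2^l-1}$ (each with $2^{m-l}$ columns) by $[G_0\ \cdots\ G_{2^l-1}]$ = row blocks $M_{0,l},\dots,M_{l,l}$ stacked. $G$ is the semi-infinite matrix whose $j$-th block row has $G_0,\dots,G_{2^l-1}$ in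 block columns $j,\dots,j+2^l-1$ and zeros elsewhere. $\Gamma_2$ = finitely supported binary sequences; $C^\perp$ is the Euclidean dual in $\Gamma_2$. *)

From HB Require Import structures.
From mathcomp Require Import all_boot all_order all_algebra.
Set Implicit Arguments. Unset Strict Implicit. Unset Printing Implicit Defensive.
Import GRing.Theory.
Local Open Scope ring_scope.

Definition F2 : finFieldType := 'F_2.

(* Vectors of F_2^N are represented by functions nat -> F2 (entry p, 0-indexed,
   for p < N; entries beyond the length are never used). *)
Definition vec := nat -> F2.

(* b_0 = all ones; for i >= 1, b_i = concatenation of blocks (0 1) with
   0,1 constant of length 2^(i-1): entry p is bit (i-1) of p. *)
Definition bvec (i : nat) : vec :=
  fun p => if i == 0%N then 1 else (odd (p %/ 2 ^ i.-1)%N)%:R.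

Definition monomial (s : nat) (A : {set 'I_s}) : vec :=
  fun p => \prod_(k in A) bvec k.+1 p.

(* rows of B_s^i : all products of i distinct elements of {b_1,...,b_s};
   B_s^0 = b_0; empty for i < 0 or i > s *)
Definition Brows (s : nat) (i : int) : seq vec :=
  match i with
  | Posz d => [seq monomial A | A <- enum [set A : {set 'I_s} | #|A| == d]]
  | Negz _ => [::]
  end.

(* rows of G_s^r : B_s^r, ..., B_s^0 stacked (empty if r < 0) *)
Definition Grows (s : nat) (r : int) : seq vec :=
  match r with
  | Posz d => flatten [seq Brows s (Posz (d - i)%N) | i <- iota 0 d.+1]
  | Negz _ => [::]
  end.

(* c w_j : concatenation of copies of w_j = (1,1,0,...,0) in F_2^(2^j) *)
Definition wrep (j : nat) : vec := fun p => if (p %% 2 ^ j < 2)%N then 1 else 0.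

(* row (2^(l-i-1) w_{i+1}) (x) v  for v a row of B_{m-l}^{r-i}; length 2^m *)
Definition kronrow (l m i : nat) (v : vec) : vec :=
  fun p => wrep i.+1 (p %/ 2 ^ (m - l))%N * v (p %% 2 ^ (m - l))%N.

(* row [g 0 ... 0] of M_{l,l}, length 2^m *)
Definition padrow (l m : nat) (v : vec) : vec :=
  fun p => if (p < 2 ^ (m - l))%N then v p else 0.

(* rows of the matrix [G_0 ... G_{2^l-1}] = M_{0,l}, ..., M_{l,l} stacked *)
Definition Mrows (l m r : nat) : seq vec :=
  flatten [seq [seq kronrow l m i v | v <- Brows (m - l) (r%:Z - i%:Z)]
          | i <- iota 0 l]
  ++ [seq padrow l m v | v <- Grows (m - l) (r%:Z - l%:Z)].

(* row of the semi-infinite matrix G in block row j coming from the row v of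
   [G_0 ... G_{2^l-1}]: v placed starting at column j * 2^(m-l) *)
Definition Grow (l m j : nat) (v : vec) : vec :=
  fun t => if (j * 2 ^ (m - l) <= t < j * 2 ^ (m - l) + 2 ^ m)%N
           then v (t - j * 2 ^ (m - l))%N else 0.

Definition Gamma2 (y : vec) : Prop := exists T, forall t, (T <= t)%N -> y t = 0.

(* C = Gamma_2 G : the sequences x G with x finitely supported (x j a is the
   coefficient of row a of block row j) *)
Definition conv_code (l m r : nat) (c : vec) : Prop :=
  exists (x : nat -> nat -> F2) (J : nat), forall t,
    c t = \sum_(j < J) \sum_(a < size (Mrows l m r))
            x j a * Grow l m j (nth (fun _ => 0) (Mrows l m r) a) t.

(* Euclidean dual in Gamma_2 (the inner product is the finite sum over any
   range containing the support) *)
Definition dual (C : vec -> Prop) (y : vec) : Prop :=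
  Gamma2 y /\
  forall c, C c -> forall T, (forall t, (T <= t)%N -> c t = 0) ->
    \sum_(t < T) c t * y t = 0.

(** Cut a codeword of [C] into blocks of length 2^(m-l). A row of [M_{i,l}]
   (i < l) is (2^(l-i-1) w_(i+1)) (x) v with v a product of r - i <= r of the
   b_k, so on every block it is a multiple of v; a row of [M_{l,l}] is a
   product of at most r - l of the b_k padded by zeros. Hence every block of
   every codeword lies in the Reed-Muller code R(r, m-l). The product of two
   monomials of degree <= r is a monomial of degree <= 2r < m-l, whose weight
   2^(m-l-degree) is even; so R(r, m-l) is self-orthogonal, and summing the
   block inner products shows that any two codewords are orthogonal. *)

From mathcomp Require Import all_boot all_order all_algebra zify.
Set Implicit Arguments.
Unset Strict Implicit.
Unset Printing Implicit Defensive.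
Import GRing.Theory.
Local Open Scope ring_scope.

Lemma addrr_F2 (x : F2) : x + x = 0.
Proof. exact: (addrr_pchar2 (pchar_Fp (isT : prime 2))). Qed.

(* [bit k] is the paper's b_(k+1): [bvec k.+1 p] reduces to [bit k p]. *)
Definition bit (k p : nat) : F2 := (odd (p %/ 2 ^ k))%:R.

Lemma bitM k p : bit k p * bit k p = bit k p.
Proof. by rewrite /bit; case: odd; rewrite ?mulr1 ?mulr0. Qed.

Lemma bit_small k p : (p < 2 ^ k)%N -> bit k p = 0.
Proof. by move=> lt_p; rewrite /bit divn_small. Qed.

Lemma bit_addX k p : (p < 2 ^ k)%N -> bit k (p + 2 ^ k) = 1.
Proof. by move=> lt_p; rewrite /bit divnDr // divn_small // divnn expn_gt0. Qed.

Lemma bit_addX_low k n p : (k < n)%N -> bit k (p + 2 ^ n) = bit k p.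
Proof.
move=> lt_kn; rewrite /bit divnDr ?dvdn_exp2l 1?ltnW // -expnB 1?ltnW //.
by rewrite oddD oddX subn_eq0 leqNgt lt_kn addbF.
Qed.

Lemma sum_bit_products n (P : pred nat) : (exists2 k, k < n & ~~ P k)%N ->
  \sum_(p < 2 ^ n) \prod_(k < n) (if P k then bit k p else 1) = 0.
Proof.
(* Split on the top bit: if [P n] the lower half vanishes, otherwise the two
   halves are equal and cancel in characteristic 2. *)
elim: n => [[k] // | n IHn] ex_k.
have -> : (2 ^ n.+1 = 2 ^ n + 2 ^ n)%N by rewrite expnS mul2n addnn.
rewrite big_split_ord /=.
under eq_bigr do rewrite big_ord_recr /=.
under [X in _ + X]eq_bigr => p _.
  rewrite big_ord_recr /= addnC.
  under eq_bigr do rewrite bit_addX_low //.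
  over.
have [Pn | nPn] /= := boolP (P n); last first.
  by rewrite -big_split /= big1 // => p _; rewrite mulr1 addrr_F2.
rewrite big1 ?add0r => [|p _]; last by rewrite bit_small ?mulr0.
under eq_bigr do rewrite bit_addX // mulr1.
apply: IHn.
case: ex_k => k; rewrite ltnS leq_eqVlt => /predU1P[-> | lt_kn] nPk.
  by rewrite Pn in nPk.
by exists k.
Qed.

Lemma monomialE n (A : {set 'I_n}) p :
  monomial A p = \prod_(k < n) (if k \in A then bit k p else 1).
Proof. by rewrite /monomial big_mkcond. Qed.

Lemma monomialM n (A B : {set 'I_n}) p :
  monomial A p * monomial B p = monomial (A :|: B) p.
Proof.
rewrite !monomialE -big_split; apply: eq_bigr => k _ /=.
by rewrite in_setU; case: (k \in A); case: (k \in B); rewrite ?mulr1 ?mul1r ?bitM.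
Qed.

Lemma sum_monomial n (A : {set 'I_n}) :
  (#|A| < n)%N -> \sum_(p < 2 ^ n) monomial A p = 0.
Proof.
move=> ltAn; have /subsetPn[k _ nAk] : ~~ ([set: 'I_n] \subset A).
  by apply: contraL ltAn => /subset_leq_card; rewrite cardsT card_ord -leqNgt.
rewrite -[RHS](@sum_bit_products n (fun j => j \in image val A)); last first.
  by exists (val k); rewrite ?ltn_ord ?(mem_image val_inj).
apply: eq_bigr => p _; rewrite monomialE.
by apply: eq_bigr => j _; rewrite (mem_image val_inj).
Qed.

(* The first 2^n entries of u form a codeword of R(r, n). *)
Definition in_RM (n r : nat) (u : vec) : Prop :=
  exists coef : {set 'I_n} -> F2, forall p, (p < 2 ^ n)%N ->
    u p = \sum_(A : {set 'I_n} | (#|A| <= r)%N) coef A * monomial A p.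

Section ReedMuller.
Variables n r : nat.

Lemma in_RM_ext (u u' : vec) :
  in_RM n r u -> (forall p, p < 2 ^ n -> u p = u' p)%N -> in_RM n r u'.
Proof. by move=> [coef Hu] eq_u; exists coef => p lt_p; rewrite -eq_u ?Hu. Qed.

Lemma in_RM0 : in_RM n r (fun=> 0).
Proof. by exists (fun=> 0) => p _; rewrite big1 // => A _; rewrite mul0r. Qed.

Lemma in_RM_monomial (A : {set 'I_n}) : (#|A| <= r)%N -> in_RM n r (monomial A).
Proof.
move=> le_Ar; exists (fun B => (B == A)%:R) => p _.
rewrite (bigD1 A) //= eqxx mul1r big1 ?addr0 // => B /andP[_ /negbTE->].
by rewrite mul0r.
Qed.

Lemma in_RM_scale (x : F2) (u : vec) :
  in_RM n r u -> in_RM n r (fun p => x * u p).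
Proof.
move=> [coef Hu]; exists (fun A => x * coef A) => p lt_p.
by rewrite Hu // mulr_sumr; apply: eq_bigr => A _; rewrite mulrA.
Qed.

Lemma in_RM_sum (I : Type) (s : seq I) (P : pred I) (F : I -> vec) :
  (forall i, in_RM n r (F i)) -> in_RM n r (fun p => \sum_(i <- s | P i) F i p).
Proof.
move=> RM_F; elim: s => [|i s [coef Hs]].
  by apply: in_RM_ext in_RM0 _ => p _; rewrite big_nil.
have [coef_i Hi] := RM_F i.
exists (fun A => (if P i then coef_i A else 0) + coef A) => p lt_p.
rewrite big_cons Hs // [RHS](eq_bigr _ (fun A _ => mulrDl _ _ _)) big_split /=.
case: (P i); first by rewrite Hi.
by rewrite [X in _ = X + _]big1 ?add0r // => A _; rewrite mul0r.
Qed.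

Hypothesis lt_2r_n : (2 * r < n)%N.

Lemma RM_orthogonal (u u' : vec) : in_RM n r u -> in_RM n r u' ->
  \sum_(p < 2 ^ n) u p * u' p = 0.
Proof.
move=> [coef Hu] [coef' Hu'].
under eq_bigr => p _ do rewrite Hu ?Hu' ?ltn_ord // big_distrlr /=.
rewrite exchange_big big1 //= => A le_Ar; rewrite exchange_big big1 //= => B le_Br.
under eq_bigr do rewrite mulrACA monomialM.
rewrite -mulr_sumr sum_monomial ?mulr0 //.
apply: leq_ltn_trans (leq_card_setU A B) (leq_ltn_trans _ lt_2r_n).
by rewrite mul2n -addnn leq_add.
Qed.

End ReedMuller.

Definition blockwise_RM (n r : nat) (w : vec) : Prop :=
  forall b, in_RM n r (fun p => w (b * 2 ^ n + p)%N).

Section Blockwise.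
Variables n r : nat.

Lemma blockwise_RM_tensor (c : nat -> F2) (v w : vec) : in_RM n r v ->
  (forall q p, (p < 2 ^ n)%N -> w (q * 2 ^ n + p)%N = c q * v p) ->
  blockwise_RM n r w.
Proof.
move=> RM_v w_cv q.
by apply: in_RM_ext (in_RM_scale (c q) RM_v) _ => p lt_p; rewrite w_cv.
Qed.

Lemma blockwise_RM_scale (x : F2) (w : vec) :
  blockwise_RM n r w -> blockwise_RM n r (fun t => x * w t).
Proof. by move=> RM_w b; apply: in_RM_scale. Qed.

Lemma blockwise_RM_sum (I : Type) (s : seq I) (P : pred I) (F : I -> vec) :
  (forall i, blockwise_RM n r (F i)) ->
  blockwise_RM n r (fun t => \sum_(i <- s | P i) F i t).
Proof.
move=> RM_F b.
exact: (@in_RM_sum n r I s P (fun i p => F i (b * 2 ^ n + p)%N) (fun i => RM_F i b)).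
Qed.

Lemma blockwise_RM_orthogonal (w w' : vec) K : (2 * r < n)%N ->
  blockwise_RM n r w -> blockwise_RM n r w' ->
  \sum_(t < K * 2 ^ n) w t * w' t = 0.
Proof.
move=> lt_2r_n RM_w RM_w'; elim: K => [|K IHK]; first by rewrite big_ord0.
rewrite mulSnr big_split_ord /= IHK add0r.
exact: (RM_orthogonal lt_2r_n (RM_w K) (RM_w' K)).
Qed.

End Blockwise.

(* [vec] has no decidable equality, so the boolean [all] is unavailable. *)
Fixpoint all_prop (T : Type) (P : T -> Prop) (s : seq T) : Prop :=
  if s is x :: s' then P x /\ all_prop P s' else True.

Lemma all_prop_in (T : eqType) (P : T -> Prop) (s : seq T) :
  (forall x, x \in s -> P x) -> all_prop P s.
Proof.
elim: s => //= x s IHs Ps; split; first by apply: Ps; rewrite mem_head.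
by apply: IHs => y s_y; apply: Ps; rewrite inE s_y orbT.
Qed.

Lemma all_prop_map (T U : Type) (P : T -> Prop) (Q : U -> Prop) (f : U -> T) s :
  (forall x, Q x -> P (f x)) -> all_prop Q s -> all_prop P (map f s).
Proof.
by move=> QP; elim: s => //= x s IHs [Qx Qs]; split; [apply: QP | apply: IHs].
Qed.

Lemma all_prop_cat (T : Type) (P : T -> Prop) (s1 s2 : seq T) :
  all_prop P s1 -> all_prop P s2 -> all_prop P (s1 ++ s2).
Proof. by elim: s1 => //= x s1 IHs1 [Px Ps1] Ps2; split; last exact: IHs1. Qed.

Lemma all_prop_flatten (T : Type) (P : T -> Prop) (ss : seq (seq T)) :
  all_prop (all_prop P) ss -> all_prop P (flatten ss).
Proof.
by elim: ss => //= s ss IHss [Ps Pss]; apply: all_prop_cat; last exact: IHss.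
Qed.

Lemma all_prop_nth (T : Type) (P : T -> Prop) (x0 : T) (s : seq T) a :
  all_prop P s -> (a < size s)%N -> P (nth x0 s a).
Proof. by elim: s a => //= x s IHs [|a] [Px Ps] //; apply: IHs. Qed.

Lemma Brows_RM n r (z : int) :
  (z <= r%:Z)%R -> all_prop (in_RM n r) (Brows n z).
Proof.
case: z => [d | //]; rewrite /Brows lez_nat => le_dr.
apply: (all_prop_map (Q := fun A => A \in [set A : {set 'I_n} | #|A| == d])).
  by move=> A; rewrite inE => /eqP card_A; apply: in_RM_monomial; rewrite card_A.
by apply: all_prop_in => A; rewrite mem_enum.
Qed.

Lemma Grows_RM n r (z : int) :
  (z <= r%:Z)%R -> all_prop (in_RM n r) (Grows n z).
Proof.
case: z => [d | //]; rewrite /Grows lez_nat => le_dr.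
apply: all_prop_flatten; apply: (all_prop_map (Q := fun=> True)).
  by move=> i _; apply: Brows_RM; rewrite lez_nat (leq_trans (leq_subr _ _)).
exact: all_prop_in.
Qed.

Section Generator.
Variables l m r : nat.
Local Notation N := (2 ^ (m - l))%N.

Lemma kronrow_block i (v : vec) q p :
  (p < N)%N -> kronrow l m i v (q * N + p)%N = wrep i.+1 q * v p.
Proof.
move=> lt_p; rewrite /kronrow divnMDl ?expn_gt0 // divn_small // addn0.
by rewrite modnMDl modn_small.
Qed.

Lemma padrow_block (v : vec) q p :
  (p < N)%N -> padrow l m v (q * N + p)%N = (q == 0)%:R * v p.
Proof.
move=> lt_p; rewrite /padrow; case: q => [|q]; first by rewrite mul0n add0n lt_p mul1r.
by rewrite mul0r ltnNge (leq_trans _ (leq_addr _ _)) // leq_pmull.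
Qed.

Lemma Mrows_blockwise_RM : all_prop (blockwise_RM (m - l) r) (Mrows l m r).
Proof.
apply: all_prop_cat.
  apply: all_prop_flatten; apply: (all_prop_map (Q := fun=> True)); last first.
    exact: all_prop_in.
  move=> i _; apply: (all_prop_map (Q := in_RM (m - l) r)); last by apply: Brows_RM; lia.
  by move=> v RM_v; apply: blockwise_RM_tensor RM_v (kronrow_block i v).
apply: (all_prop_map (Q := in_RM (m - l) r)); last by apply: Grows_RM; lia.
by move=> v RM_v; apply: blockwise_RM_tensor RM_v (padrow_block v).
Qed.

Lemma Grow_vanishes j (v : vec) t : (j * N + 2 ^ m <= t)%N -> Grow l m j v t = 0.
Proof. by rewrite /Grow leqNgt => /negbTE->; rewrite andbF. Qed.

Hypothesis le_lm : (l <= m)%N.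

Lemma Grow_block j (v : vec) b p : (p < N)%N ->
  Grow l m j v (b * N + p)%N =
    if (j <= b < j + 2 ^ l)%N then v ((b - j) * N + p)%N else 0.
Proof.
move=> lt_p; rewrite /Grow; have N_gt0 : (0 < N)%N by rewrite expn_gt0.
have blockE : ((b * N + p) %/ N = b)%N by rewrite divnMDl // divn_small // addn0.
have -> : (j * N <= b * N + p)%N = (j <= b)%N by rewrite -leq_divRL // blockE.
have -> : (b * N + p < j * N + 2 ^ m)%N = (b < j + 2 ^ l)%N.
  have -> : (2 ^ m = 2 ^ l * N)%N by rewrite -expnD subnKC.
  by rewrite -mulnDl -ltn_divLR // blockE.
case: ifP => // /andP[le_jb _].
by rewrite -addnBAC ?leq_mul2r ?le_jb ?orbT // -mulnBl.
Qed.

Lemma blockwise_RM_Grow j (v : vec) :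
  blockwise_RM (m - l) r v -> blockwise_RM (m - l) r (Grow l m j v).
Proof.
move=> RM_v b; have [in_window | out_window] := boolP (j <= b < j + 2 ^ l)%N.
  by apply: in_RM_ext (RM_v (b - j)%N) _ => p lt_p; rewrite Grow_block // in_window.
by apply: in_RM_ext (in_RM0 (m - l) r) _ => p lt_p; rewrite Grow_block // (negbTE out_window).
Qed.

End Generator.

Lemma conv_code_Gamma2 l m r (c : vec) : conv_code l m r c -> Gamma2 c.
Proof.
move=> [x [J c_xG]]; exists (J * 2 ^ (m - l) + 2 ^ m)%N => t le_t.
rewrite c_xG big1 // => j _; rewrite big1 // => a _.
by rewrite Grow_vanishes ?mulr0 // (leq_trans _ le_t) // leq_add2r leq_mul2r ltnW ?orbT.
Qed.

Lemma conv_code_blockwise_RM l m r (c : vec) : (l <= m)%N ->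
  conv_code l m r c -> blockwise_RM (m - l) r c.
Proof.
move=> le_lm [x [J c_xG]] b.
set rows := Mrows l m r.
suff RM_xG : blockwise_RM (m - l) r (fun t =>
    \sum_(j < J) \sum_(a < size rows) x j a * Grow l m j (nth (fun=> 0) rows a) t).
  by apply: in_RM_ext (RM_xG b) _ => p _; rewrite c_xG.
apply: blockwise_RM_sum => j; apply: blockwise_RM_sum => a.
apply/blockwise_RM_scale/blockwise_RM_Grow => //.
exact: all_prop_nth (Mrows_blockwise_RM l m r) (ltn_ord a).
Qed.

Theorem mainTheorem12 (l m r : nat) :
  (1 <= l)%N -> (l <= m)%N -> ((2 * r).+1 <= m - l)%N ->
  forall c : vec, conv_code l m r c -> dual (conv_code l m r) c.
Proof.
move=> _ le_lm lt_2r_n c code_c; split; first exact: conv_code_Gamma2 code_c.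
move=> c' code_c' T supp_c'.
have le_T : (T <= T * 2 ^ (m - l))%N by rewrite leq_pmulr ?expn_gt0.
rewrite (big_ord_widen _ (fun t => c' t * c t) le_T) big_mkcond /=.
rewrite -[RHS](blockwise_RM_orthogonal T lt_2r_n
  (conv_code_blockwise_RM le_lm code_c') (conv_code_blockwise_RM le_lm code_c)).
by apply: eq_bigr => t _; case: ltnP => // /supp_c' ->; rewrite mul0r.
Qed.
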